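(* Let $q$ be a prime power, $m$ a positive integer with $\gcd(m,q)=1$, $\lambda\in\mathbb{F}_q^*$, and $R_\lambda=\mathbb{F}_q[x]/\langle x^m-\lambda\rangle$. Let $C$ and $D$ be one-generator $\lambda$-quasi-twisted codes of length $2m$ and index $2$ over $\mathbb{F}_q$, i.e. $C$ is the $R_\lambda$-submodule of $R_\lambda^2$ generated by $(g_{11}(x),g_{12}(x))$ and $D$ is the $R_\lambda$-submodule generated by $(f_{11}(x),f_{12}(x))$, where $g_{11}(x)\mid x^m-\lambda$ and $f_{11}(x)\mid x^m-\lambda$. Then $(C,D)$ is a linear complementary pair of codes if and only if: (A) $\gcd(g_{11}(x),g_{12}(x))=1$; (B) $\gcd(f_{11}(x),f_{12}(x))=1$; (C) $\gcd\big(x^m-\lambda,\,g_{11}(x)f_{12}(x)-g_{12}(x)f_{11}(x)\big)=1$.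
   Context: A pair $(C,D)$ of $\mathbb{F}_q$-linear codes of the same length $n$ is a linear complementary pair (LCP) of codes if $C\cap D=\{0\}$ and $C+D=\mathbb{F}_q^n$. For $\lambda\in\mathbb{F}_q^*$, $T_\lambda(x_0,\dots,x_{n-1})=(\lambda x_{n-1},x_0,\dots,x_{n-2})$; a linear code $C\subseteq\mathbb{F}_q^{2m}$ is $\lambda$-quasi-twisted of index $2$ if $T_\lambda^2(C)\subseteq C$, and it is identified with an $R_\lambda$-submodule of $R_\lambda^2$ via $(c_{0,0},c_{0,1},\dots,c_{m-1,0},c_{m-1,1})\mapsto(c_0(x),c_1(x))$, $c_j(x)=\sum_i c_{i,j}x^i$; elements of $R_\lambda$ are represented by polynomials in $\mathbb{F}_q[x]$. *)

From HB Require Import structures.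
From mathcomp Require Import all_boot all_order all_algebra all_field.
Set Implicit Arguments. Unset Strict Implicit. Unset Printing Implicit Defensive.
Import GRing.Theory.
Local Open Scope ring_scope.

Section QT.
Variable F : finFieldType.

Definition qt_mod (m : nat) (lam : F) : {poly F} := 'X^m - lam%:P.

Definition vcoord (n : nat) (v : 'rV[F]_n) (k : nat) : F :=
  if insub k is Some i then v ord0 i else 0.

(* The identification F^(2m) -> R_lambda^2:
   (c_{0,0},c_{0,1},...,c_{m-1,0},c_{m-1,1}) |-> (c_0(x), c_1(x)),
   c_j(x) = sum_i c_{i,j} x^i, with c_{i,j} the coordinate of index 2i+j. *)
Definition qt_comp (m : nat) (v : 'rV[F]_(2 * m)) (j : nat) : {poly F} :=
  \poly_(i < m) vcoord v (2 * i + j).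

(* The one-generator lambda-QT code of index 2 generated by (g1, g2):
   the R_lambda-submodule { a (g1, g2) : a in R_lambda } of R_lambda^2,
   seen as a subset of F^(2m). Elements of R_lambda are represented by
   polynomials of degree < m (reduction modulo x^m - lambda). *)
Definition qt_code1 (m : nat) (lam : F) (g1 g2 : {poly F}) : 'rV[F]_(2 * m) -> Prop :=
  fun v => exists a : {poly F},
    qt_comp v 0 = (a * g1) %% qt_mod m lam /\ qt_comp v 1 = (a * g2) %% qt_mod m lam.

Definition is_LCP (n : nat) (C D : 'rV[F]_n -> Prop) : Prop :=
  (forall v, C v -> D v -> v = 0) /\
  (forall v, exists c d, C c /\ D d /\ v = c + d).

End QT.

Arguments qt_code1 {F} m lam g1 g2 _.
Arguments is_LCP {F n} C D.

From mathcomp Require Import all_boot all_order all_algebra all_field.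
From mathcomp Require Import zify ring.
Set Implicit Arguments. Unset Strict Implicit. Unset Printing Implicit Defensive.
Import GRing.Theory.
Local Open Scope ring_scope.

(* Write M = x^m - lam and d = g11 f12 - g12 f11, the determinant of the matrix
   G with rows (g11, g12) and (f11, f12), so that C + D is the row space of G
   over R_lam.  If C + D is everything, (1,0) and (0,1) lie in it, so G has a
   left inverse modulo M and d is a unit modulo M.  Conversely, if w d = 1 mod M,
   the adjugate w adj(G) writes every vector as an element of C + D, and a
   vector a (g11, g12) = b (f11, f12) of C \cap D gives M | a d, hence M | a and
   the vector is 0.  Finally g11 | M and d = -g12 f11 mod g11 make g11 coprime
   to g12, and symmetrically f11 coprime to f12. *)

Section PolyCongruences.
Variable F : fieldType.
Implicit Types M a b c e f g p q w : {poly F}.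

Lemma modp_eq_dvdp M p q : p %% M = q %% M <-> M %| p - q.
Proof. by rewrite /dvdp modpD modpN subr_eq0; split=> /eqP. Qed.

Lemma coprimep_modinvP M q : (exists w, M %| 1 - w * q) <-> coprimep M q.
Proof.
split=> [[w /dvdpP [k Ek]] | /Bezout_eq1_coprimepP [[u w] /= Euw]].
  have : coprimep M (w * q).
    by rewrite -[w * q](subrK 1) -opprB Ek -mulNr coprimep_addl_mul coprimep1.
  by rewrite coprimepMr => /andP[].
by exists w; rewrite -Euw addrK dvdp_mull.
Qed.

Lemma coprimep_det_dvdl M a b c e :
  a %| M -> coprimep M (a * e - b * c) -> coprimep a b.
Proof.
move=> aM /(coprimep_dvdr aM).
have -> : a * e - b * c = e * a + b * (- c) by ring.
by rewrite coprimep_addl_mul coprimepMr => /andP[].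
Qed.

Lemma dvdp_det_kernel M g1 g2 f1 f2 a b :
  coprimep M (g1 * f2 - g2 * f1) ->
  M %| a * g1 - b * f1 -> M %| a * g2 - b * f2 -> M %| a.
Proof.
move=> cop D1 D2; rewrite -(Gauss_dvdpl _ cop).
have -> : a * (g1 * f2 - g2 * f1) = (a * g1 - b * f1) * f2 - (a * g2 - b * f2) * f1
  by ring.
by apply: dvdp_sub; apply: dvdp_mulr.
Qed.

Lemma coprimep_det_of_modinv M g1 g2 f1 f2 a1 b1 a2 b2 :
  M %| 1 - (a1 * g1 + b1 * f1) -> M %| a1 * g2 + b1 * f2 ->
  M %| a2 * g1 + b2 * f1 -> M %| 1 - (a2 * g2 + b2 * f2) ->
  coprimep M (g1 * f2 - g2 * f1).
Proof.
move=> D11 D12 D21 D22; apply/coprimep_modinvP; exists (a1 * b2 - a2 * b1).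
(* Cauchy-Binet for the product of the matrices [a1 b1; a2 b2] and [g1 g2; f1 f2]. *)
have -> : 1 - (a1 * b2 - a2 * b1) * (g1 * f2 - g2 * f1) =
    (1 - (a1 * g1 + b1 * f1)) * (a2 * g2 + b2 * f2)
    + (1 - (a2 * g2 + b2 * f2)) + (a1 * g2 + b1 * f2) * (a2 * g1 + b2 * f1) by ring.
by apply: dvdp_add; [apply: dvdp_add; [exact: dvdp_mulr | exact: D22] | exact: dvdp_mulr].
Qed.

End PolyCongruences.

Section QTVectors.
Variables (F : finFieldType) (m : nat) (lam : F).
Implicit Types (p q : {poly F}) (v : 'rV[F]_(2 * m)).
Local Notation M := (qt_mod m lam).

Lemma vcoord_ord n (u : 'rV[F]_n) (k : 'I_n) : vcoord u k = u ord0 k.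
Proof. by rewrite /vcoord valK. Qed.

(* Inverse of the identification [qt_comp]: a pair of residues modulo x^m - lam,
   interleaved into a vector of F^(2m). *)
Definition qt_vec p0 p1 : 'rV[F]_(2 * m) :=
  \row_(k < 2 * m) ((if (k %% 2 == 0)%N then p0 else p1) %% M)`_(k %/ 2).

Hypothesis m_gt0 : (0 < m)%N.

Lemma size_modp_qt_mod p : (size (p %% M)%R <= m)%N.
Proof.
have sM : size M = m.+1 by rewrite size_XnsubC.
by rewrite -ltnS -sM ltn_modpN0 // -size_poly_eq0 sM.
Qed.

Lemma qt_comp_modp v j : qt_comp v j %% M = qt_comp v j.
Proof. by rewrite modp_small // size_XnsubC // ltnS size_poly. Qed.

Lemma qt_vecK p0 p1 j : (j < 2)%N ->
  qt_comp (qt_vec p0 p1) j = (if j == 0%N then p0 else p1) %% M.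
Proof.
move=> j_lt2; apply/polyP => i; rewrite coef_poly.
case: ltnP => [i_lt_m | m_le_i]; last first.
  by rewrite nth_default // (leq_trans (size_modp_qt_mod _)).
have k_lt : (2 * i + j < 2 * m)%N by lia.
rewrite -[(2 * i + j)%N]/(nat_of_ord (Ordinal k_lt)) vcoord_ord mxE /=.
have -> : ((2 * i + j) %/ 2 = i)%N by lia.
by have -> : ((2 * i + j) %% 2 = j)%N by lia.
Qed.

Lemma qt_compK v : qt_vec (qt_comp v 0) (qt_comp v 1) = v.
Proof.
apply/rowP => k; rewrite mxE.
have -> : (if (k %% 2 == 0)%N then qt_comp v 0 else qt_comp v 1) = qt_comp v (k %% 2).
  by have [->|->] : (k %% 2 = 0 \/ k %% 2 = 1)%N by lia.
have k_div : (k %/ 2 < m)%N by have := ltn_ord k; lia.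
have k_eq : (2 * (k %/ 2) + k %% 2 = k)%N by lia.
by rewrite qt_comp_modp coef_poly k_div k_eq vcoord_ord.
Qed.

Lemma qt_vecD p0 p1 q0 q1 : qt_vec (p0 + q0) (p1 + q1) = qt_vec p0 p1 + qt_vec q0 q1.
Proof. by apply/rowP => k; rewrite !mxE; case: ifP; rewrite modpD coefD. Qed.

Lemma qt_vec_eq p0 p1 q0 q1 :
  qt_vec p0 p1 = qt_vec q0 q1 <-> M %| p0 - q0 /\ M %| p1 - q1.
Proof.
split=> [E | [/modp_eq_dvdp E0 /modp_eq_dvdp E1]]; last first.
  by apply/rowP => k; rewrite !mxE; case: ifP; rewrite ?E0 ?E1.
have := congr1 (fun u => qt_comp u 0) E; have := congr1 (fun u => qt_comp u 1) E.
by rewrite !qt_vecK //= => /modp_eq_dvdp ? /modp_eq_dvdp.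
Qed.

Lemma qt_vec_dvdp0 p0 p1 : M %| p0 -> M %| p1 -> qt_vec p0 p1 = 0.
Proof.
move=> /eqP D0 /eqP D1.
by apply/rowP => k; rewrite !mxE; case: ifP; rewrite ?D0 ?D1 coef0.
Qed.

Lemma qt_code1E g1 g2 v :
  qt_code1 m lam g1 g2 v <-> exists a, v = qt_vec (a * g1) (a * g2).
Proof.
split=> [[a [E0 E1]] | [a ->]]; last by exists a; rewrite !qt_vecK.
by exists a; rewrite -[v]qt_compK E0 E1; apply/qt_vec_eq; rewrite -!modp_eq_dvdp !modp_id.
Qed.

Section OneGeneratorCodes.
Variables g1 g2 f1 f2 : {poly F}.
Local Notation C := (qt_code1 m lam g1 g2).
Local Notation D := (qt_code1 m lam f1 f2).
Local Notation det := (g1 * f2 - g2 * f1).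

Lemma qt_code1_meet0 v : coprimep M det -> C v -> D v -> v = 0.
Proof.
move=> cop /qt_code1E [a Ea] /qt_code1E [b Eb].
have [D1 D2] : M %| a * g1 - b * f1 /\ M %| a * g2 - b * f2.
  by apply/qt_vec_eq; rewrite -Ea.
have Ma := dvdp_det_kernel cop D1 D2.
by rewrite Ea qt_vec_dvdp0 // dvdp_mulr.
Qed.

Lemma qt_code1_add_full v : coprimep M det -> exists c e, [/\ C c, D e & v = c + e].
Proof.
move=> /coprimep_modinvP [w Dw].
set p0 := qt_comp v 0; set p1 := qt_comp v 1.
pose a := w * (p0 * f2 - p1 * f1); pose b := w * (p1 * g1 - p0 * g2).
exists (qt_vec (a * g1) (a * g2)), (qt_vec (b * f1) (b * f2)).
split; [by apply/qt_code1E; exists a | by apply/qt_code1E; exists b |].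
rewrite -qt_vecD -[v]qt_compK -/p0 -/p1; apply/qt_vec_eq.
have -> : p0 - (a * g1 + b * f1) = p0 * (1 - w * det) by rewrite /a /b; ring.
have -> : p1 - (a * g2 + b * f2) = p1 * (1 - w * det) by rewrite /a /b; ring.
by rewrite !dvdp_mull.
Qed.

Lemma is_LCP_qt_code1_coprimep : is_LCP C D -> coprimep M det.
Proof.
move=> [_ full].
have [c1 [e1 [/qt_code1E [a1 ->] [/qt_code1E [b1 ->] E1]]]] := full (qt_vec 1 0).
have [c2 [e2 [/qt_code1E [a2 ->] [/qt_code1E [b2 ->] E2]]]] := full (qt_vec 0 1).
move: E1 E2; rewrite -!qt_vecD => /qt_vec_eq [D11 D12] /qt_vec_eq [D21 D22].
by apply: (coprimep_det_of_modinv D11 _ _ D22); rewrite -dvdpNr -sub0r.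
Qed.

End OneGeneratorCodes.
End QTVectors.

Theorem theorem5p4 (F : finFieldType) (m : nat) (lam : F)
  (g11 g12 f11 f12 : {poly F}) :
  (0 < m)%N -> coprime m #|F| -> lam != 0 ->
  g11 %| qt_mod m lam -> f11 %| qt_mod m lam ->
  is_LCP (qt_code1 m lam g11 g12) (qt_code1 m lam f11 f12) <->
  [/\ coprimep g11 g12, coprimep f11 f12 &
      coprimep (qt_mod m lam) (g11 * f12 - g12 * f11)].
Proof.
move=> m_gt0 _ _ g11M f11M; split=> [LCP | [_ _ cop]].
  have cop := is_LCP_qt_code1_coprimep m_gt0 LCP.
  split=> //; first exact: coprimep_det_dvdl g11M cop.
  have Edet : g11 * f12 - g12 * f11 = f11 * - g12 - f12 * - g11 by ring.
  by rewrite Edet in cop; exact: coprimep_det_dvdl f11M cop.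
split=> v; first exact: qt_code1_meet0.
by have [c [e [Cc De ->]]] := qt_code1_add_full m_gt0 v cop; exists c, e.
Qed.
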